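(* Let $S$ be a complete star-omega semiring, let $\Sigma$ be an alphabet, and let $\mathcal P=(n,\Gamma,I,M,P,p_0,l)$ be an $S\langle\Sigma\cup\{\epsilon\}\rangle$-$\omega$-pushdown automaton over $(S\langle\langle\Sigma^*\rangle\rangle,S\langle\langle\Sigma^\omega\rangle\rangle)$. Put $x_0=I(M^* )_{p_0,\epsilon}P$, $x_p=(M^* )_{p,\epsilon}$, $z_0=I(M^{\omega,l})_{p_0}$, $z_p=(M^{\omega,l})_p$ ($p\in\Gamma$). Then these satisfy the mixed algebraic system $$x_0=I x_{p_0}P,\qquad x_p=\sum_{\pi=p_1\dots p_k\in\Gamma^*}M_{p,\pi}\,x_{p_1}\cdots x_{p_k}\ (p\in\Gamma),$$ $$z_0=I z_{p_0},\qquad z_p=\sum_{\pi=p_1\dots p_k\in\Gamma^+}M_{p,\pi}\sum_{1\le j\le k}x_{p_1}\cdots x_{p_{j-1}}z_{p_j}\ (p\in\Gamma),$$ where the empty product $x_{p_1}\cdots x_{p_k}$ for $k=0$ is the $n\times n$ identity matrix.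
   Context: A complete semiring-semimodule pair $(S,V)$ (in the sense of Ésik and Kuich, ''Modern Automata Theory'') consists of a complete starsemiring $S$ (arbitrary sums with infinite associativity/commutativity/distributivity laws, star $s^*=\sum_{j\ge0}s^j$) and a complete $S$-semimodule $V$, with infinite products $\prod_{j\ge1}s_j\in V$ of sequences in $S$ satisfying the axioms of that framework. $S$ is a complete star-omega semiring if $(S,S)$ is a complete semiring-semimodule pair; then $(S\langle\langle\Sigma^*\rangle\rangle,S\langle\langle\Sigma^\omega\rangle\rangle)$ (formal power series over finite, resp. infinite, words) is a complete semiring-semimodule pair. $S\langle\Sigma\cup\{\epsilon\}\rangle$ denotes the series with support contained in $\Sigma\cup\{\epsilon\}$. A pushdown transition matrix $M\in (S'^{n\times n})^{\Gamma^*\times\Gamma^*}$ (here $S'=S\langle\Sigma\cup\{\epsilon\}\rangle$; a $\Gamma^*\times\Gamma^*$ matrix with $n\times n$ blocks over $S'$) satisfies (i) for each $p\in\Gamma$ only finitely many blocks $M_{p,\pi}$ are nonzero, and (ii) $M_{\pi_1,\pi_2}=M_{p,\pi}$ if $\pi_1=p\pi'$, $\pi_2=\pi\pi'$ for some $p\in\Gamma$, $\pi,\pi'\in\Gamma^*$, and $0$ otherwise. An $S'$-$\omega$-pushdown automaton $(n,\Gamma,I,M,P,p_0,l)$ consists of $n\ge1$ (states $1,\dots,n$), an alphabet $\Gamma$, such a matrix $M$, $I\in S'^{1\times n}$, $P\in S'^{n\times1}$, $p_0\in\Gamma$ and $l\in\{0,\dots,n\}$. $M^*=\sum_{m\ge0}M^m$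 with blocks $(M^* )_{\pi,\pi'}$; with $P_l=\{(j_1,j_2,\dots)\in\{1,\dots,n\}^\omega\mid j_t\le l\text{ for infinitely many }t\}$, $M^{\omega,l}\in ((S\langle\langle\Sigma^\omega\rangle\rangle)^n)^{\Gamma^*}$ is given by $((M^{\omega,l})_\pi)_i=\sum_{\pi_1,\pi_2,\ldots\in\Gamma^*}\sum_{(j_1,j_2,\ldots)\in P_l}(M_{\pi,\pi_1})_{i,j_1}(M_{\pi_1,\pi_2})_{j_1,j_2}\cdots$. *)

From mathcomp Require Import all_boot.
Set Implicit Arguments. Unset Strict Implicit. Unset Printing Implicit Defensive.

(* Complete star-omega semiring: a complete semiring S (arbitrary sums indexed *)
(* by arbitrary types) such that (S,S) is a complete semiring-semimodule pair   *)
(* (infinite products of sequences, Esik-Kuich axioms).                       *)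
Record csos := CSOS {
  car :> Type;
  sadd : car -> car -> car;
  smul : car -> car -> car;
  szero : car;
  sone : car;
  csum : forall I : Type, (I -> car) -> car;
  iprod : (nat -> car) -> car;
  saddA : forall a b c, sadd a (sadd b c) = sadd (sadd a b) c;
  saddC : forall a b, sadd a b = sadd b a;
  sadd0 : forall a, sadd szero a = a;
  smulA : forall a b c, smul a (smul b c) = smul (smul a b) c;
  smul1l : forall a, smul sone a = a;
  smul1r : forall a, smul a sone = a;
  smulDl : forall a b c, smul (sadd a b) c = sadd (smul a c) (smul b c);
  smulDr : forall a b c, smul a (sadd b c) = sadd (smul a b) (smul a c);
  smul0l : forall a, smul szero a = szero;
  smul0r : forall a, smul a szero = szero;
  csum_empty : forall (I : Type) (f : I -> car), (I -> False) -> csum f = szero;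
  csum_unit : forall f : unit -> car, csum f = f tt;
  csum_bool : forall f : bool -> car, csum f = sadd (f true) (f false);
  csum_bij : forall (I J : Type) (e : J -> I) (f : I -> car),
      bijective e -> csum (fun j => f (e j)) = csum f;
  csum_sigma : forall (J : Type) (I : J -> Type) (f : {j : J & I j} -> car),
      csum f = csum (fun j => csum (fun i : I j => f (existT _ j i)));
  csum_mull : forall (I : Type) (f : I -> car) c,
      smul c (csum f) = csum (fun i => smul c (f i));
  csum_mulr : forall (I : Type) (f : I -> car) c,
      smul (csum f) c = csum (fun i => smul (f i) c);
  iprod_shift : forall s : nat -> car,
      iprod s = smul (s 0) (iprod (fun j => s j.+1));
  iprod_group : forall (s : nat -> car) (b : nat -> nat),
      b 0 = 0 -> (forall j, b j < b j.+1) ->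
      iprod s = iprod (fun j =>
        foldr (fun k acc => smul (s k) acc) sone (iota (b j) (b j.+1 - b j)));
  iprod_csum : forall (I : nat -> Type) (f : forall j, I j -> car),
      iprod (fun j => csum (f j)) =
      csum (fun g : (forall j, I j) => iprod (fun j => f j (g j)))
}.

Section Series.
Variable S : csos.
Variable Sigma : finType.

Definition ser := seq Sigma -> S.
Definition oser := (nat -> Sigma) -> S.

Definition ser0 : ser := fun _ => szero S.
Definition ser1 : ser := fun w => if w == [::] then sone S else szero S.
Definition seradd (r r' : ser) : ser := fun w => sadd (r w) (r' w).
Definition sermul (r r' : ser) : ser := fun w =>
  csum (fun p : {p : seq Sigma * seq Sigma | p.1 ++ p.2 = w} =>
          smul (r (sval p).1) (r' (sval p).2)).
Definition sersum (I : Type) (f : I -> ser) : ser := fun w => csum (fun i => f i w).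
Definition osersum (I : Type) (f : I -> oser) : oser := fun w => csum (fun i => f i w).
Definition seract (r : ser) (s : oser) : oser := fun w =>
  csum (fun k : nat => smul (r (mkseq w k)) (s (fun i => w (k + i)))).
(* u_0 u_1 u_2 ... = w  (factorization of an infinite word into finite words) *)
Definition factorizes (u : nat -> seq Sigma) (w : nat -> Sigma) : Prop :=
  (forall m, flatten (mkseq u m) = mkseq w (size (flatten (mkseq u m)))) /\
  (forall k, exists m, k <= size (flatten (mkseq u m))).
Definition seriprod (r : nat -> ser) : oser := fun w =>
  csum (fun u : {u : nat -> seq Sigma | factorizes u w} =>
          iprod (fun j => r j (sval u j))).

Definition in_Seps (r : ser) : Prop := forall w, 1 < size w -> r w = szero S.

Variable n : nat.
Definition mat := 'I_n -> 'I_n -> ser.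
Definition ovec := 'I_n -> oser.
Definition mat0 : mat := fun _ _ => ser0.
Definition mat1 : mat := fun i j => if i == j then ser1 else ser0.
Definition matmul (A B : mat) : mat := fun i j =>
  sersum (fun k : 'I_n => sermul (A i k) (B k j)).
Definition matsum (I : Type) (f : I -> mat) : mat := fun i j => sersum (fun k => f k i j).
Definition mprod (l : seq mat) : mat := foldr matmul mat1 l.
Definition matvec (A : mat) (v : ovec) : ovec := fun i =>
  osersum (fun k : 'I_n => seract (A i k) (v k)).
Definition ovecsum (I : Type) (f : I -> ovec) : ovec := fun i => osersum (fun k => f k i).
Definition rowmat (I : 'I_n -> ser) (A : mat) : 'I_n -> ser := fun j =>
  sersum (fun i : 'I_n => sermul (I i) (A i j)).
Definition rowcol (I P : 'I_n -> ser) : ser := sersum (fun i : 'I_n => sermul (I i) (P i)).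
Definition rowovec (I : 'I_n -> ser) (v : ovec) : oser :=
  osersum (fun i : 'I_n => seract (I i) (v i)).

Variable Gamma : finType.
Definition pmat := seq Gamma -> seq Gamma -> mat.
Definition pmat1 : pmat := fun pi pi' => if pi == pi' then mat1 else mat0.
Definition pmatmul (A B : pmat) : pmat := fun pi pi' i j =>
  sersum (fun q : seq Gamma * 'I_n => sermul (A pi q.1 i q.2) (B q.1 pi' q.2 j)).
Definition pmatpow (M : pmat) (m : nat) : pmat := iter m (pmatmul M) pmat1.
Definition pstar (M : pmat) : pmat := fun pi pi' i j =>
  sersum (fun m : nat => pmatpow M m pi pi' i j).

Definition is_pdtm (M : pmat) : Prop :=
  (forall pi1 pi2 i j, in_Seps (M pi1 pi2 i j)) /\
  (forall p : Gamma, exists s : seq (seq Gamma),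
      forall pi, pi \notin s -> M [:: p] pi = mat0) /\
  (forall pi1 pi2,
      (forall (p : Gamma) (pi pi' : seq Gamma),
          pi1 = p :: pi' -> pi2 = pi ++ pi' -> M pi1 pi2 = M [:: p] pi) /\
      ((~ exists (p : Gamma) (pi pi' : seq Gamma), pi1 = p :: pi' /\ pi2 = pi ++ pi') ->
          M pi1 pi2 = mat0)).

(* M^{omega,l}; states are 0,...,n-1, so "j <= l" (1-based) becomes "j < l" *)
Definition in_Pl (l : nat) (js : nat -> 'I_n) : Prop :=
  forall N, exists t, N <= t /\ js t < l.
Definition pomega (M : pmat) (l : nat) (pi : seq Gamma) : ovec := fun i =>
  osersum (fun q : {q : (nat -> seq Gamma) * (nat -> 'I_n) | in_Pl l q.2} =>
    let pis t := if t is t'.+1 then (sval q).1 t' else pi in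
    let js t := if t is t'.+1 then (sval q).2 t' else i in
    seriprod (fun t => M (pis t) (pis t.+1) (js t) (js t.+1))).

End Series.

From mathcomp Require Import all_boot.
From Stdlib Require Import Classical ClassicalEpsilon ProofIrrelevance.
From Stdlib Require Import FunctionalExtensionality PropExtensionality.
Set Implicit Arguments. Unset Strict Implicit. Unset Printing Implicit Defensive.

(* Write x_pi for the block (M^* )_{pi,eps}, the weight of the computations emptying the
   stack pi.  A transition only reads the top of the stack, so emptying al ++ be amounts to
   emptying al down to be and then emptying be; splitting the number of steps accordingly
   gives x_(al ++ be) = x_al x_be, and peeling off the first step of M^* yields the equations
   for x_p.
   An infinite run from al ++ be either never shows the stack be, and then it never touches
   this bottom part and is a run from al with be appended, or it shows be for the first time
   after m steps, which contributes (M^m)_{al,eps} (M^{omega,l})_be.  Summing over m,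
   (M^{omega,l})_(al ++ be) = (M^{omega,l})_al + x_al (M^{omega,l})_be; unfolding this along
   pi = p_1 ... p_k after one step of M gives the equations for z_p (no run starts from the
   empty stack). *)

Local Notation funext := (functional_extensionality _ _).

Lemma sval_inj (A : Type) (P : A -> Prop) : injective (@sval A P).
Proof. exact: eq_sig_hprop (fun a => @proof_irrelevance (P a)). Qed.

Lemma sigT_sval_inj (A B : Type) (P : A -> B -> Prop) (x y : {a : A & {b : B | P a b}}) :
  projT1 x = projT1 y -> sval (projT2 x) = sval (projT2 y) -> x = y.
Proof.
case: x y => a [b p] [a' [b' p']] /= Ea Eb; subst a' b'.
by rewrite (proof_irrelevance _ p p').
Qed.

Lemma catIs (T : Type) (s : seq T) : injective (fun t => t ++ s).
Proof.
move=> t1 t2 E; have /eqP := congr1 size E; rewrite !size_cat eqn_add2r => /eqP Et.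
by rewrite -(take_size_cat s (erefl (size t1))) E take_size_cat.
Qed.

Section CompleteSums.
Variable S : csos.
Implicit Types (I J : Type).

Lemma saddr0 (a : S) : sadd a (szero S) = a.
Proof. by rewrite saddC sadd0. Qed.

Lemma csum0 I (f : I -> S) : (forall i, f i = szero S) -> csum f = szero S.
Proof.
move=> f0; have -> : f = fun i => smul (szero S) (szero S).
  by apply: funext => i; rewrite f0 smul0l.
by rewrite -csum_mull smul0l.
Qed.

Lemma eq_csum I (f g : I -> S) : (forall i, f i = g i) -> csum f = csum g.
Proof. by move=> fg; rewrite (funext fg). Qed.

Lemma reindex_csum I J (e : J -> I) (g : I -> J) (f : I -> S) (F : J -> S) :
  cancel e g -> cancel g e -> (forall j, F j = f (e j)) -> csum F = csum f.
Proof. by move=> eK gK /funext ->; apply: csum_bij; exists g. Qed.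

Lemma csum_sigT J (I : J -> Type) (f : forall j, I j -> S) :
  csum (fun j => csum (fun i : I j => f j i)) =
  csum (fun x : {j & I j} => f (projT1 x) (projT2 x)).
Proof. by rewrite (csum_sigma (fun x : {j & I j} => f (projT1 x) (projT2 x))). Qed.

Lemma csum_pair I J (f : I -> J -> S) :
  csum (fun i => csum (fun j => f i j)) = csum (fun x : I * J => f x.1 x.2).
Proof.
rewrite csum_sigT; apply: (reindex_csum (e := fun x : {i : I & J} => (projT1 x, projT2 x))
  (g := fun x : I * J => existT _ x.1 x.2)) => //; by case.
Qed.

Lemma exchange_csum I J (f : I -> J -> S) :
  csum (fun i => csum (fun j => f i j)) = csum (fun j => csum (fun i => f i j)).
Proof.
rewrite !csum_pair; apply: (reindex_csum (e := fun x : I * J => (x.2, x.1))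
  (g := fun x : J * I => (x.2, x.1))) => //; by case.
Qed.

Lemma csum_sum I J (f : I + J -> S) :
  csum f = sadd (csum (fun i => f (inl i))) (csum (fun j => f (inr j))).
Proof.
pose T (b : bool) := if b then I else J.
pose e (x : {b : bool & T b}) : I + J :=
  match x with existT true i => inl i | existT false j => inr j end.
pose g (x : I + J) : {b : bool & T b} :=
  match x with inl i => existT T true i | inr j => existT T false j end.
rewrite -(@reindex_csum _ _ e g f (fun x => f (e x))) //; last by case.
  by rewrite (csum_sigma (fun x => f (e x))) csum_bool.
by case=> [[]].
Qed.

Lemma csum_option I (f : option I -> S) :
  csum f = sadd (f None) (csum (fun i => f (Some i))).
Proof.
pose e (x : unit + I) := if x is inr i then Some i else None.
pose g (x : option I) := if x is Some i then inr i else inl tt.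
rewrite -(@reindex_csum _ _ e g f (fun x => f (e x))) ?csum_sum ?csum_unit //.
- by case=> [[]|].
- by case.
Qed.

Lemma csum_natS (f : nat -> S) : csum f = sadd (f 0) (csum (fun m => f m.+1)).
Proof.
pose e (x : option nat) := if x is Some m then m.+1 else 0.
pose g (m : nat) := if m is m'.+1 then Some m' else None.
by rewrite -(@reindex_csum _ _ e g f (fun x => f (e x))) ?csum_option //; case.
Qed.

Lemma csum_ord_recl k (f : 'I_k.+1 -> S) :
  csum f = sadd (f ord0) (csum (fun j : 'I_k => f (lift ord0 j))).
Proof.
pose e (x : option 'I_k) := if x is Some j then lift ord0 j else ord0.
rewrite -(@reindex_csum _ _ e (@unlift k.+1 ord0) f (fun x => f (e x))).
- by rewrite csum_option.
- by case=> [j|]; rewrite /e ?liftK ?unlift_none.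
- by move=> j; rewrite /e; case: unliftP => [j' ->|->].
- by [].
Qed.

Lemma csum_support I (P : I -> Prop) (f : I -> S) :
  (forall i, ~ P i -> f i = szero S) -> csum f = csum (fun x : {i | P i} => f (sval x)).
Proof.
move=> f0; pose e (x : {i | P i} + {i | ~ P i}) :=
  match x with inl i => sval i | inr i => sval i end.
pose g i : {i | P i} + {i | ~ P i} :=
  match excluded_middle_informative (P i) with
  | left p => inl (exist _ i p) | right np => inr (exist _ i np) end.
rewrite -(@reindex_csum _ _ e g f (fun x => f (e x))).
- by rewrite csum_sum [X in sadd _ X]csum0 ?saddr0 // => -[i /= /f0].
- move=> [] [i p]; rewrite /g /=; case: excluded_middle_informative => // q;
    by rewrite (proof_irrelevance _ p q).
- by move=> i; rewrite /g; case: excluded_middle_informative.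
- by [].
Qed.

Lemma csum_inj I J (e : J -> I) (f : I -> S) : injective e ->
  (forall i, (forall j, e j <> i) -> f i = szero S) -> csum f = csum (fun j => f (e j)).
Proof.
move=> e_inj f0; pose P i := exists j, e j = i.
rewrite (@csum_support _ P); last by move=> i Ni; apply: f0 => j Eij; apply: Ni; exists j.
pose h j : {i | P i} := exist _ (e j) (ex_intro _ j erefl).
pose g (x : {i | P i}) := sval (constructive_indefinite_description _ (proj2_sig x)).
symmetry; apply: (@reindex_csum _ _ h g) => //.
- move=> j; rewrite /g /=; case: constructive_indefinite_description => j' /=; exact: e_inj.
- by move=> x; apply: sval_inj; rewrite /g /=; case: constructive_indefinite_description.
Qed.

Lemma csum_single I (i0 : I) (f : I -> S) :
  (forall i, i <> i0 -> f i = szero S) -> csum f = f i0.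
Proof.
move=> f0; rewrite (@csum_inj _ _ (fun _ : unit => i0)) ?csum_unit //.
- by do 2!case.
- by move=> i Ni; apply: f0 => Ei; apply: (Ni tt).
Qed.

Lemma partition_csum I O (P : O -> I -> Prop) (f : I -> S) :
  (forall i, exists! o, P o i) ->
  csum f = csum (fun o => csum (fun x : {i | P o i} => f (sval x))).
Proof.
move=> uP; rewrite csum_sigT; pose c i := constructive_indefinite_description _ (uP i).
symmetry; apply: (reindex_csum (e := fun x : {o : O & {i | P o i}} => sval (projT2 x))
  (g := fun i => existT _ (sval (c i)) (exist _ i (proj1 (proj2_sig (c i)))))) => //.
case=> o [i p]; rewrite /c /=; case: constructive_indefinite_description => o' [p' U] /=.
by apply: sigT_sval_inj => //=; apply: U.
Qed.

End CompleteSums.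

Lemma mkseqD (T : Type) (f : nat -> T) m k :
  mkseq f (m + k) = mkseq f m ++ mkseq (fun i => f (m + i)) k.
Proof.
by rewrite /mkseq iotaD map_cat add0n -{2}(addn0 m) iotaDl -map_comp.
Qed.

Lemma mkseqSl (T : Type) (f : nat -> T) m : mkseq f m.+1 = f 0 :: mkseq (fun i => f i.+1) m.
Proof. by rewrite -add1n mkseqD. Qed.

Section SeriesAlgebra.
Variables (S : csos) (Sigma : finType).
Local Notation ser := (ser S Sigma).
Local Notation oser := (oser S Sigma).
Local Notation ser0 := (@ser0 S Sigma).
Local Notation ser1 := (@ser1 S Sigma).

Definition oser0 : oser := fun _ => szero S.

Lemma sermul_suml I (f : I -> ser) (r : ser) :
  sermul (sersum f) r = sersum (fun i => sermul (f i) r).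
Proof.
apply: funext => w; rewrite /sermul /sersum.
under eq_csum => p do rewrite csum_mulr.
exact: exchange_csum.
Qed.

Lemma sermul_sumr I (f : I -> ser) (r : ser) :
  sermul r (sersum f) = sersum (fun i => sermul r (f i)).
Proof.
apply: funext => w; rewrite /sermul /sersum.
under eq_csum => p do rewrite csum_mull.
exact: exchange_csum.
Qed.

Lemma sermul0l (r : ser) : sermul ser0 r = ser0.
Proof. apply: funext => w; apply: csum0 => p; exact: smul0l. Qed.

Lemma sermul0r (r : ser) : sermul r ser0 = ser0.
Proof. apply: funext => w; apply: csum0 => p; exact: smul0r. Qed.

Lemma sermul1l (r : ser) : sermul ser1 r = r.
Proof.
apply: funext => w; rewrite /sermul.
rewrite (@csum_single _ _ (exist (fun p => p.1 ++ p.2 = w) ([::], w) erefl)).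
  by rewrite /= /ser1 eqxx smul1l.
case=> -[u v] /= Euv Nuv; rewrite /ser1; case: eqP => [u0|_]; last exact: smul0l.
by case: Nuv; apply: sval_inj; rewrite /= -Euv u0.
Qed.

Lemma sermulA (a b c : ser) : sermul (sermul a b) c = sermul a (sermul b c).
Proof.
apply: funext => w; rewrite /sermul.
under eq_csum => p do rewrite csum_mulr.
under [RHS]eq_csum => p do rewrite csum_mull.
rewrite !csum_sigT.
pose F2 v := {p : seq Sigma * seq Sigma | p.1 ++ p.2 = v}.
have catA_l (x : {p : F2 w & F2 (sval p).2}) :
    ((sval (projT1 x)).1 ++ (sval (projT2 x)).1) ++ (sval (projT2 x)).2 = w.
  by case: x => -[[u vt] /= <-] [[v t] /= <-]; rewrite catA.
have catA_r (x : {p : F2 w & F2 (sval p).1}) :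
    (sval (projT2 x)).1 ++ ((sval (projT2 x)).2 ++ (sval (projT1 x)).2) = w.
  by case: x => -[[uv t] /= <-] [[u v] /= <-]; rewrite catA.
pose split_left x := existT (fun p : F2 w => F2 (sval p).1)
  (exist _ (_, _) (catA_l x)) (exist _ (_, _) erefl).
pose split_right x := existT (fun p : F2 w => F2 (sval p).2)
  (exist _ (_, _) (catA_r x)) (exist _ (_, _) erefl).
symmetry; apply: (reindex_csum (e := split_left) (g := split_right)).
- case=> -[[u vt] Euvt] [[v t] /= Evt]; apply: sigT_sval_inj => //=.
  by apply: sval_inj; rewrite /= Evt.
- case=> -[[uv t] Euvt] [[u v] /= Euv]; apply: sigT_sval_inj => //=.
  by apply: sval_inj; rewrite /= Euv.
- by case=> -[[u vt] Euvt] [[v t] /= Evt]; rewrite smulA.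
Qed.

Lemma seract_suml I (f : I -> ser) (s : oser) :
  seract (sersum f) s = osersum (fun i => seract (f i) s).
Proof.
apply: funext => w; rewrite /seract /osersum /sersum.
under eq_csum => k do rewrite csum_mulr.
exact: exchange_csum.
Qed.

Lemma seract_sumr I (f : I -> oser) (r : ser) :
  seract r (osersum f) = osersum (fun i => seract r (f i)).
Proof.
apply: funext => w; rewrite /seract /osersum.
under eq_csum => k do rewrite csum_mull.
exact: exchange_csum.
Qed.

Lemma seract0l (s : oser) : seract ser0 s = oser0.
Proof. apply: funext => w; apply: csum0 => k; exact: smul0l. Qed.

Lemma seract0r (r : ser) : seract r oser0 = oser0.
Proof. apply: funext => w; apply: csum0 => k; exact: smul0r. Qed.

Lemma seract1 (s : oser) : seract ser1 s = s.
Proof.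
apply: funext => w; rewrite /seract (@csum_single _ _ 0).
  by rewrite /ser1 /= smul1l.
move=> k k0; rewrite /ser1; case: eqP => [|_]; last exact: smul0l.
by move/(congr1 size); rewrite size_mkseq; case: k k0.
Qed.

Lemma seractA (a b : ser) (s : oser) : seract (sermul a b) s = seract a (seract b s).
Proof.
apply: funext => w; rewrite /seract /sermul.
under eq_csum => k do rewrite csum_mulr.
under [RHS]eq_csum => k do rewrite csum_mull.
rewrite !csum_sigT.
pose prefix_fact := {k : nat & {p : seq Sigma * seq Sigma | p.1 ++ p.2 = mkseq w k}}.
pose glue (x : {k1 : nat & nat}) : prefix_fact :=
  let: existT k1 k2 := x in
  existT _ (k1 + k2) (exist _ (mkseq w k1, mkseq (fun i => w (k1 + i)) k2) (esym (mkseqD w k1 k2))).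
pose cut (x : prefix_fact) : {k1 : nat & nat} :=
  existT _ (size (sval (projT2 x)).1) (size (sval (projT2 x)).2).
symmetry; apply: (reindex_csum (e := glue) (g := cut)).
- by case=> k1 k2; rewrite /cut /= !size_mkseq.
- case=> k [[u v] /= Euv].
  have Ek : k = size u + size v by rewrite -size_cat Euv size_mkseq.
  have /andP[/eqP Eu /eqP Ev] :
      (mkseq w (size u) == u) && (mkseq (fun i => w (size u + i)) (size v) == v).
    by rewrite -eqseq_cat ?size_mkseq // -mkseqD -Ek Euv.
  by apply: sigT_sval_inj => /=; rewrite ?Eu ?Ev.
- case=> k1 k2 /=; rewrite smulA; congr (smul _ (s _)).
  by apply: funext => i; rewrite addnA.
Qed.

End SeriesAlgebra.

Lemma iprod_eq0 (S : csos) (s : nat -> S) t : s t = szero S -> iprod s = szero S.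
Proof.
elim: t s => [|t IHt] s st0; rewrite iprod_shift; first by rewrite st0 smul0l.
by rewrite (IHt (fun j => s j.+1)) ?smul0r.
Qed.

Definition scons (T : Type) (x : T) (s : nat -> T) : nat -> T :=
  fun t => if t is t'.+1 then s t' else x.

Section InfiniteProducts.
Variables (S : csos) (Sigma : finType).
Local Notation ser := (ser S Sigma).

Definition wshift (w : nat -> Sigma) k : nat -> Sigma := fun i => w (k + i).

Lemma factorizes_head (u : nat -> seq Sigma) w : factorizes u w -> mkseq w (size (u 0)) = u 0.
Proof. by case=> /(_ 1) /=; rewrite cats0 => <-. Qed.

Lemma factorizes_cons k (u : nat -> seq Sigma) w :
  factorizes u (wshift w k) -> factorizes (scons (mkseq w k) u) w.
Proof.
case=> prefix_u cover_u; split=> [[|m] //|K].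
  by rewrite mkseqSl /= size_cat size_mkseq mkseqD -prefix_u.
have [m Km] := cover_u K; exists m.+1.
by rewrite mkseqSl /= size_cat (leq_trans Km (leq_addl _ _)).
Qed.

Lemma factorizes_behead (u : nat -> seq Sigma) w :
  factorizes u w -> factorizes (fun j => u j.+1) (wshift w (size (u 0))).
Proof.
move=> uw; have u0 := factorizes_head uw; case: uw => prefix_u cover_u; split=> [m|K].
  have := prefix_u m.+1; rewrite mkseqSl /= size_cat mkseqD u0.
  by move/(congr1 (drop (size (u 0)))); rewrite !drop_size_cat.
have [[|m] Km] := cover_u (size (u 0) + K).
  by exists 0; move: Km; rewrite /= leqn0 addn_eq0 => /andP[_ /eqP ->].
by exists m; move: Km; rewrite mkseqSl /= size_cat leq_add2l.
Qed.

Lemma seriprod_shift (r : nat -> ser) :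
  seriprod r = seract (r 0) (seriprod (fun t => r t.+1)).
Proof.
apply: funext => w; rewrite /seriprod /seract.
under [RHS]eq_csum => k do rewrite csum_mull.
rewrite csum_sigT.
pose glue (x : {k : nat & {u | factorizes u (wshift w k)}}) :=
  exist (fun u => factorizes u w) _ (factorizes_cons (proj2_sig (projT2 x))).
pose cut (u : {u | factorizes u w}) :=
  existT (fun k => {u | factorizes u (wshift w k)}) _
    (exist (fun v => factorizes v _) _ (factorizes_behead (proj2_sig u))).
symmetry; apply: (reindex_csum (e := glue) (g := cut)).
- by case=> k [u uw]; apply: sigT_sval_inj; rewrite //= size_mkseq.
- case=> u uw; apply: sval_inj; apply: funext => -[|j] //=.
  exact: factorizes_head.
- by case=> k [u uw] /=; rewrite [RHS]iprod_shift.
Qed.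

Lemma seriprod_eq0 (r : nat -> ser) t : r t = @ser0 S Sigma -> seriprod r = @oser0 S Sigma.
Proof.
by move=> rt0; apply: funext => w; apply: csum0 => u; apply: (iprod_eq0 (t := t)); rewrite rt0.
Qed.

End InfiniteProducts.

Section Matrices.
Variables (S : csos) (Sigma : finType) (n : nat).
Local Notation ser := (ser S Sigma).
Local Notation oser := (oser S Sigma).
Local Notation mat := (mat S Sigma n).
Local Notation ovec := (ovec S Sigma n).
Local Notation ser0 := (@ser0 S Sigma).
Local Notation oser0 := (@oser0 S Sigma).
Local Notation mat0 := (@mat0 S Sigma n).
Local Notation mat1 := (@mat1 S Sigma n).

Definition ovec0 : ovec := fun _ => oser0.

Lemma matE (A B : mat) : (forall i j, A i j = B i j) -> A = B.
Proof. by move=> AB; apply: funext => i; apply: funext => j; apply: AB. Qed.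

Lemma eq_sersum I (f g : I -> ser) : (forall i, f i = g i) -> sersum f = sersum g.
Proof. by move=> /funext ->. Qed.

Lemma eq_osersum I (f g : I -> oser) : (forall i, f i = g i) -> osersum f = osersum g.
Proof. by move=> /funext ->. Qed.

Lemma eq_matsum I (f g : I -> mat) : (forall i, f i = g i) -> matsum f = matsum g.
Proof. by move=> /funext ->. Qed.

Lemma eq_ovecsum I (f g : I -> ovec) : (forall i, f i = g i) -> ovecsum f = ovecsum g.
Proof. by move=> /funext ->. Qed.

Lemma exchange_sersum I J (f : I -> J -> ser) :
  sersum (fun i => sersum (f i)) = sersum (fun j => sersum (f^~ j)).
Proof. apply: funext => w; exact: exchange_csum. Qed.

Lemma exchange_osersum I J (f : I -> J -> oser) :
  osersum (fun i => osersum (f i)) = osersum (fun j => osersum (f^~ j)).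
Proof. apply: funext => w; exact: exchange_csum. Qed.

Lemma exchange_matsum I J (f : I -> J -> mat) :
  matsum (fun i => matsum (f i)) = matsum (fun j => matsum (f^~ j)).
Proof. apply: matE => i j; apply: funext => w; exact: exchange_csum. Qed.

Lemma sersum_single I (i0 : I) (f : I -> ser) :
  (forall i, i <> i0 -> f i = ser0) -> sersum f = f i0.
Proof. by move=> f0; apply: funext => w; apply: csum_single => i /f0 ->. Qed.

Lemma osersum_single I (i0 : I) (f : I -> oser) :
  (forall i, i <> i0 -> f i = oser0) -> osersum f = f i0.
Proof. by move=> f0; apply: funext => w; apply: csum_single => i /f0 ->. Qed.

Lemma matsum_single I (i0 : I) (f : I -> mat) :
  (forall i, i <> i0 -> f i = mat0) -> matsum f = f i0.
Proof. by move=> f0; apply: matE => i j; apply: funext => w; apply: csum_single => k /f0 ->. Qed.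

Lemma sersum0 I (f : I -> ser) : (forall i, f i = ser0) -> sersum f = ser0.
Proof. by move=> f0; apply: funext => w; apply: csum0 => i; rewrite f0. Qed.

Lemma osersum0 I (f : I -> oser) : (forall i, f i = oser0) -> osersum f = oser0.
Proof. by move=> f0; apply: funext => w; apply: csum0 => i; rewrite f0. Qed.

Lemma matsum0 I (f : I -> mat) : (forall i, f i = mat0) -> matsum f = mat0.
Proof. by move=> f0; apply: matE => i j; apply: funext => w; apply: csum0 => k; rewrite f0. Qed.

Lemma ovecsum0 I (f : I -> ovec) : (forall i, f i = ovec0) -> ovecsum f = ovec0.
Proof. by move=> f0; apply: funext => i; apply: funext => w; apply: csum0 => k; rewrite f0. Qed.

Lemma matsum_natS (f : nat -> mat) : f 0 = mat0 -> matsum f = matsum (fun m => f m.+1).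
Proof.
by move=> f0; apply: matE => i j; apply: funext => w; rewrite /matsum /sersum csum_natS f0 sadd0.
Qed.

Lemma matsum_inj I J (e : J -> I) (f : I -> mat) : injective e ->
  (forall i, (forall j, e j <> i) -> f i = mat0) -> matsum f = matsum (fun j => f (e j)).
Proof.
move=> e_inj f0; apply: matE => i j; apply: funext => w.
by apply: csum_inj => // k /f0 ->.
Qed.

Lemma ovecsum_inj I J (e : J -> I) (f : I -> ovec) : injective e ->
  (forall i, (forall j, e j <> i) -> f i = ovec0) -> ovecsum f = ovecsum (fun j => f (e j)).
Proof.
move=> e_inj f0; apply: funext => i; apply: funext => w.
by apply: csum_inj => // k /f0 ->.
Qed.

Lemma matmul_suml I (f : I -> mat) (B : mat) :
  matmul (matsum f) B = matsum (fun x => matmul (f x) B).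
Proof.
apply: matE => i j; rewrite /matmul /matsum.
under eq_sersum => k do rewrite sermul_suml.
exact: exchange_sersum.
Qed.

Lemma matmul_sumr I (f : I -> mat) (A : mat) :
  matmul A (matsum f) = matsum (fun x => matmul A (f x)).
Proof.
apply: matE => i j; rewrite /matmul /matsum.
under eq_sersum => k do rewrite sermul_sumr.
exact: exchange_sersum.
Qed.

Lemma matmulA (A B C : mat) : matmul (matmul A B) C = matmul A (matmul B C).
Proof.
apply: matE => i j; rewrite /matmul.
under eq_sersum => k do rewrite sermul_suml.
under [RHS]eq_sersum => k do rewrite sermul_sumr.
rewrite exchange_sersum; apply: eq_sersum => k; apply: eq_sersum => k'.
exact: sermulA.
Qed.

Lemma matmul1l (A : mat) : matmul mat1 A = A.
Proof.
apply: matE => i j; rewrite /matmul (sersum_single (i0 := i)) /mat1 ?eqxx ?sermul1l //.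
by move=> k /eqP; rewrite eq_sym => /negbTE ->; rewrite sermul0l.
Qed.

Lemma matmul0l (A : mat) : matmul mat0 A = mat0.
Proof. apply: matE => i j; apply: sersum0 => k; exact: sermul0l. Qed.

Lemma matmul0r (A : mat) : matmul A mat0 = mat0.
Proof. apply: matE => i j; apply: sersum0 => k; exact: sermul0r. Qed.

Lemma matvec_suml I (f : I -> mat) (v : ovec) :
  matvec (matsum f) v = ovecsum (fun x => matvec (f x) v).
Proof.
apply: funext => i; rewrite /matvec /matsum /ovecsum.
under eq_osersum => k do rewrite seract_suml.
exact: exchange_osersum.
Qed.

Lemma matvec_sumr I (f : I -> ovec) (A : mat) :
  matvec A (ovecsum f) = ovecsum (fun x => matvec A (f x)).
Proof.
apply: funext => i; rewrite /matvec /ovecsum.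
under eq_osersum => k do rewrite seract_sumr.
exact: exchange_osersum.
Qed.

Lemma matvecA (A B : mat) (v : ovec) : matvec (matmul A B) v = matvec A (matvec B v).
Proof.
apply: funext => i; rewrite /matvec /matmul.
under eq_osersum => k do rewrite seract_suml.
under [RHS]eq_osersum => k do rewrite seract_sumr.
rewrite exchange_osersum; apply: eq_osersum => k; apply: eq_osersum => k'.
exact: seractA.
Qed.

Lemma matvec1 (v : ovec) : matvec mat1 v = v.
Proof.
apply: funext => i; rewrite /matvec (osersum_single (i0 := i)) /mat1 ?eqxx ?seract1 //.
by move=> k /eqP; rewrite eq_sym => /negbTE ->; rewrite seract0l.
Qed.

Lemma matvec0l (v : ovec) : matvec mat0 v = ovec0.
Proof. apply: funext => i; apply: osersum0 => k; exact: seract0l. Qed.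

Lemma matvec0r (A : mat) : matvec A ovec0 = ovec0.
Proof. apply: funext => i; apply: osersum0 => k; exact: seract0r. Qed.

End Matrices.

Lemma pmatmulE (S : csos) (Sigma : finType) n (Gamma : finType)
    (A B : pmat S Sigma n Gamma) pi pi' :
  pmatmul A B pi pi' = matsum (fun g => matmul (A pi g) (B g pi')).
Proof.
apply: matE => i j; apply: funext => w; rewrite /pmatmul /matsum /matmul /sersum.
by rewrite -(csum_pair (fun g k => sermul (A pi g i k) (B g pi' k j) w)).
Qed.

Section PushdownStar.
Variables (S : csos) (Sigma : finType) (n : nat) (Gamma : finType).
Variable M : pmat S Sigma n Gamma.
Hypothesis M_pd : is_pdtm M.
Local Notation mat := (mat S Sigma n).
Local Notation ovec := (ovec S Sigma n).
Local Notation mat0 := (@mat0 S Sigma n).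
Local Notation mat1 := (@mat1 S Sigma n).
Local Notation pow := (pmatpow M).

Lemma pdtm_nil g : M [::] g = mat0.
Proof. by case: M_pd => _ [_ /(_ [::] g) [_ ->]] // [p [pi [pi' []]]]. Qed.

Lemma pdtm_cons_cat a rho d : M (a :: rho) (d ++ rho) = M [:: a] d.
Proof. by case: M_pd => _ [_ /(_ (a :: rho) (d ++ rho)) [/(_ a d rho) -> //]]. Qed.

Lemma pdtm_cons_notcat a rho g : (forall d, d ++ rho <> g) -> M (a :: rho) g = mat0.
Proof.
move=> Ng; case: M_pd => _ [_ /(_ (a :: rho) g) [_ ->]] // [p [pi [pi' [[_ <-] Eg]]]].
exact: (Ng pi).
Qed.

Lemma matsum_pdtm_cons a rho (F : seq Gamma -> mat) :
  matsum (fun g => matmul (M (a :: rho) g) (F g)) =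
  matsum (fun d => matmul (M [:: a] d) (F (d ++ rho))).
Proof.
rewrite (matsum_inj (e := fun d => d ++ rho)); last 2 first.
- exact: catIs.
- by move=> g Ng; rewrite pdtm_cons_notcat // matmul0l.
by apply: eq_matsum => d; rewrite pdtm_cons_cat.
Qed.

Lemma ovecsum_pdtm_cons a rho (F : seq Gamma -> ovec) :
  ovecsum (fun g => matvec (M (a :: rho) g) (F g)) =
  ovecsum (fun d => matvec (M [:: a] d) (F (d ++ rho))).
Proof.
rewrite (ovecsum_inj (e := fun d => d ++ rho)); last 2 first.
- exact: catIs.
- by move=> g Ng; rewrite pdtm_cons_notcat // matvec0l.
by apply: eq_ovecsum => d; rewrite pdtm_cons_cat.
Qed.

Lemma pmatpowS m pi pi' : pow m.+1 pi pi' = matsum (fun g => matmul (M pi g) (pow m g pi')).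
Proof. exact: pmatmulE. Qed.

Lemma pmatpow_nil m : pow m [::] [::] = if m == 0 then mat1 else mat0.
Proof.
case: m => [|m]; first by rewrite /= /pmat1 eqxx.
by rewrite pmatpowS; apply: matsum0 => g; rewrite pdtm_nil matmul0l.
Qed.

(* To empty [al ++ be] in [m] steps, first empty [al] down to [be] in some [m1 <= m] steps. *)
Lemma pmatpow_cat m al be : pow m (al ++ be) [::] =
  matsum (fun m1 => if m1 <= m then matmul (pow m1 al [::]) (pow (m - m1) be [::]) else mat0).
Proof.
elim: m al => [|m IHm] [|a al].
- by rewrite (matsum_single (i0 := 0)) /= ?matmul1l // => -[].
- by symmetry; apply: matsum0 => -[|m1]; rewrite //= matmul0l.
- rewrite (matsum_single (i0 := 0)) /= ?matmul1l ?subn0 // => -[|m1] // _.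
  by rewrite pmatpow_nil; case: ifP; rewrite ?matmul0l.
rewrite cat_cons pmatpowS matsum_pdtm_cons.
under eq_matsum => d do rewrite catA IHm matmul_sumr.
rewrite exchange_matsum [RHS]matsum_natS; last by rewrite /= matmul0l.
apply: eq_matsum => m1; rewrite ltnS subSS; case: ifP => _; last first.
  by apply: matsum0 => d; rewrite matmul0r.
under eq_matsum => d do rewrite -matmulA.
by rewrite pmatpowS matsum_pdtm_cons matmul_suml.
Qed.

Lemma pstar_nil : pstar M [::] [::] = mat1.
Proof.
rewrite /pstar -/(matsum _) (matsum_single (i0 := 0)) ?pmatpow_nil // => -[|m] //.
by rewrite pmatpow_nil.
Qed.

Lemma pstar_cat al be : pstar M (al ++ be) [::] = matmul (pstar M al [::]) (pstar M be [::]).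
Proof.
rewrite /pstar -!/(matsum _).
under eq_matsum => m do rewrite pmatpow_cat.
rewrite exchange_matsum matmul_suml; apply: eq_matsum => m1.
rewrite matmul_sumr (matsum_inj (e := addn m1)); last 2 first.
- exact: addnI.
- by move=> m Nm; case: ifP => // /subnKC Em; case: (Nm (m - m1)).
by apply: eq_matsum => m2; rewrite leq_addr addKn.
Qed.

Lemma pstar_seq pi : pstar M pi [::] = mprod (map (fun p => pstar M [:: p] [::]) pi).
Proof. by elim: pi => [|a pi IHpi]; rewrite ?pstar_nil // -cat1s pstar_cat IHpi. Qed.

Lemma pstar_unfold p : pstar M [:: p] [::] =
  matsum (fun ps => matmul (M [:: p] ps) (mprod (map (fun q => pstar M [:: q] [::]) ps))).
Proof.
rewrite /pstar -/(matsum _) matsum_natS //.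
under eq_matsum => m do rewrite pmatpowS.
rewrite exchange_matsum; apply: eq_matsum => g.
by rewrite -matmul_sumr -pstar_seq.
Qed.

End PushdownStar.

Section PushdownOmega.
Variables (S : csos) (Sigma : finType) (n : nat) (Gamma : finType).
Variable M : pmat S Sigma n Gamma.
Hypothesis M_pd : is_pdtm M.
Variable l : nat.
Local Notation oser := (oser S Sigma).
Local Notation ovec := (ovec S Sigma n).
Local Notation oser0 := (@oser0 S Sigma).
Local Notation ovec0 := (@ovec0 S Sigma n).
Local Notation mat0 := (@mat0 S Sigma n).
Local Notation pow := (pmatpow M).

Definition run := {q : (nat -> seq Gamma) * (nat -> 'I_n) | in_Pl l q.2}.
Definition run_stacks pi (q : run) := scons pi (sval q).1.
Definition run_states i (q : run) := scons i (sval q).2.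
Definition run_weight pi i (q : run) : oser :=
  seriprod (fun t => M (run_stacks pi q t) (run_stacks pi q t.+1)
                       (run_states i q t) (run_states i q t.+1)).

Lemma pomegaE pi i : pomega M l pi i = osersum (run_weight pi i).
Proof. by []. Qed.

Definition pomega_if (P : (nat -> seq Gamma) -> Prop) pi : ovec := fun i =>
  osersum (fun x : {q : run | P (run_stacks pi q)} => run_weight pi i (sval x)).

Lemma pomega_if_all P pi : (forall q, P (run_stacks pi q)) -> pomega_if P pi = pomega M l pi.
Proof.
move=> allP; apply: funext => i; apply: funext => w.
by symmetry; apply: (@csum_support _ run _ (fun q => run_weight pi i q w)).
Qed.

Lemma pomega_if_eq0 P pi : (forall q, ~ P (run_stacks pi q)) -> pomega_if P pi = ovec0.
Proof. by move=> NP; apply: funext => i; apply: funext => w; apply: csum_empty => -[q /NP]. Qed.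

Lemma in_Pl_scons k (js : nat -> 'I_n) : in_Pl l js -> in_Pl l (scons k js).
Proof. by move=> Pjs N; have [t [Nt jst]] := Pjs N; exists t.+1; rewrite leqW. Qed.

Lemma in_Pl_behead (js : nat -> 'I_n) : in_Pl l js -> in_Pl l (fun t => js t.+1).
Proof. by move=> Pjs N; have [[|t] [Nt jst]] := Pjs N.+1; last by exists t. Qed.

Definition run_cons g k (q : run) : run :=
  exist _ (scons g (sval q).1, scons k (sval q).2) (in_Pl_scons k (proj2_sig q)).
Definition run_behead (q : run) : run :=
  exist _ (fun t => (sval q).1 t.+1, fun t => (sval q).2 t.+1) (in_Pl_behead (proj2_sig q)).

Lemma run_stacks_cons pi g k q : run_stacks pi (run_cons g k q) = scons pi (run_stacks g q).
Proof. by apply: funext => -[|[|t]]. Qed.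

Lemma run_stacks_behead pi q :
  scons pi (run_stacks ((sval q).1 0) (run_behead q)) = run_stacks pi q.
Proof. by apply: funext => -[|[|t]]. Qed.

Lemma pomega_if_unfold P pi : pomega_if P pi =
  ovecsum (fun g => matvec (M pi g) (pomega_if (fun s => P (scons pi s)) g)).
Proof.
apply: funext => i; rewrite /ovecsum /matvec /pomega_if.
under [RHS]eq_osersum => g do under eq_osersum => k do rewrite seract_sumr.
apply: funext => w; rewrite /osersum.
rewrite (csum_pair (fun g k => csum (fun x => seract (M pi g i k) (run_weight g k (sval x)) w))).
rewrite csum_sigT.
pose first_move := {gk : seq Gamma * 'I_n & {q : run | P (scons pi (run_stacks gk.1 q))}}.
have consP (y : first_move) :
    P (run_stacks pi (run_cons (projT1 y).1 (projT1 y).2 (sval (projT2 y)))).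
  by case: y => gk [q Pq]; rewrite run_stacks_cons.
have beheadP (x : {q : run | P (run_stacks pi q)}) :
    P (scons pi (run_stacks ((sval (sval x)).1 0) (run_behead (sval x)))).
  by case: x => q Pq; rewrite run_stacks_behead.
pose glue (y : first_move) := exist (fun q => P (run_stacks pi q)) _ (consP y).
pose cut (x : {q : run | P (run_stacks pi q)}) :=
  existT (fun gk : seq Gamma * 'I_n => {q : run | P (scons pi (run_stacks gk.1 q))})
    ((sval (sval x)).1 0, (sval (sval x)).2 0) (exist _ _ (beheadP x)).
symmetry; apply: (reindex_csum (e := glue) (g := cut)).
- by case=> -[g k] [[[qs qj] Pq] ?]; apply: sigT_sval_inj => //=; apply: sval_inj.
- case=> -[[qs qj] Pq] ?; apply: sval_inj; apply: sval_inj => /=.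
  by congr pair; apply: funext => -[|t].
- by case=> -[g k] [q Pq] /=; rewrite /run_weight [in RHS]seriprod_shift.
Qed.

Lemma pomega_unfold pi : pomega M l pi = ovecsum (fun g => matvec (M pi g) (pomega M l g)).
Proof.
rewrite -(@pomega_if_all (fun _ => True)) // pomega_if_unfold.
by apply: eq_ovecsum => g; rewrite pomega_if_all.
Qed.

Lemma pomega_nil : pomega M l [::] = ovec0.
Proof. by rewrite pomega_unfold; apply: ovecsum0 => g; rewrite pdtm_nil // matvec0l. Qed.

Definition first_reaches (be : seq Gamma) m (s : nat -> seq Gamma) :=
  s m = be /\ forall t, t < m -> s t <> be.
Definition avoids (be : seq Gamma) (s : nat -> seq Gamma) := forall t, s t <> be.
Definition pd_move (s1 s2 : seq Gamma) := exists p pi pi', s1 = p :: pi' /\ s2 = pi ++ pi'.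
Definition pd_path (s : nat -> seq Gamma) := forall t, pd_move (s t) (s t.+1).

Lemma run_weight_eq0 pi i q : ~ pd_path (run_stacks pi q) -> run_weight pi i q = oser0.
Proof.
case/not_all_ex_not=> t Nt; apply: (seriprod_eq0 (t := t)).
by case: M_pd => _ [_ /(_ (run_stacks pi q t) (run_stacks pi q t.+1)) [_ ->]].
Qed.

Lemma cons_cat_neq (a : Gamma) al be : (a :: al) ++ be <> be.
Proof. by move/(congr1 size)/eqP; rewrite size_cat -{2}[size be]add0n eqn_add2r. Qed.

Lemma pomega_if_first_reaches be m al :
  pomega_if (first_reaches be m) (al ++ be) = matvec (pow m al [::]) (pomega M l be).
Proof.
elim: m al => [|m IHm] [|a al].
- by rewrite (pmatpow_nil M_pd) matvec1 pomega_if_all.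
- rewrite (_ : pow 0 _ _ = mat0) // matvec0l.
  by apply: pomega_if_eq0 => q [/cons_cat_neq].
- rewrite pomega_if_unfold (pmatpow_nil M_pd) /= matvec0l; apply: ovecsum0 => g.
  rewrite pomega_if_eq0 ?matvec0r // => q [_ /(_ 0 erefl)].
  by apply.
rewrite pomega_if_unfold.
have -> : (fun s => first_reaches be m.+1 (scons ((a :: al) ++ be) s)) = first_reaches be m.
  apply: funext => s; apply: propositional_extensionality; split=> [[sm Ns]|[sm Ns]].
    by split=> // t mt; apply: (Ns t.+1).
  by split=> // -[_|t]; [apply: cons_cat_neq | apply: Ns].
rewrite cat_cons (ovecsum_pdtm_cons M_pd).
under eq_ovecsum => d do rewrite catA IHm -matvecA.
by rewrite pmatpowS (matsum_pdtm_cons M_pd) matvec_suml.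
Qed.

Lemma pdtm_move_cat x y be : pd_move x y -> M (x ++ be) (y ++ be) = M x y.
Proof. by case=> p [pi [pi' [-> ->]]]; rewrite cat_cons -catA !(pdtm_cons_cat M_pd). Qed.

Lemma pd_path_nonnil s t : pd_path s -> s t <> [::].
Proof. by case/(_ t)=> p [pi [pi' [-> _]]]. Qed.

Lemma pd_path_avoids_suffix al0 be s : s 0 = al0 ++ be -> al0 <> [::] ->
  pd_path s -> avoids be s -> forall t, exists2 al, al <> [::] & s t = al ++ be.
Proof.
move=> s0 al0_nil s_path s_avoid; elim=> [|t [[//|a al] _ st]]; first by exists al0.
have [p [pi [pi' [Est Est1]]]] := s_path t.
move: Est; rewrite st cat_cons => -[_ Epi']; exists (pi ++ al).
  by move=> E; apply: (s_avoid t.+1); rewrite Est1 -Epi' catA E.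
by rewrite Est1 -Epi' catA.
Qed.

Definition run_app (be : seq Gamma) (q : run) : run :=
  exist _ (fun t => (sval q).1 t ++ be, (sval q).2) (proj2_sig q).
Definition run_strip (be : seq Gamma) (q : run) : run :=
  exist _ (fun t => take (size ((sval q).1 t) - size be) ((sval q).1 t), (sval q).2) (proj2_sig q).

Lemma run_stacks_app be pi q t : run_stacks (pi ++ be) (run_app be q) t = run_stacks pi q t ++ be.
Proof. by case: t. Qed.

Lemma run_app_inj be : injective (run_app be).
Proof.
case=> -[s1 j1] p1 [[s2 j2] p2] /(congr1 sval) [Es Ej]; apply: sval_inj => /=.
by congr pair => //; apply: funext => t; apply: (@catIs _ be); apply: (congr1 (@^~ t) Es).
Qed.

Lemma run_app_avoids be al q :
  pd_path (run_stacks al q) -> avoids be (run_stacks (al ++ be) (run_app be q)).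
Proof.
move=> q_path t; rewrite run_stacks_app -{2}[be]cat0s => /(@catIs _ be).
exact: pd_path_nonnil.
Qed.

Lemma run_weight_app be al i q : pd_path (run_stacks al q) ->
  run_weight (al ++ be) i (run_app be q) = run_weight al i q.
Proof.
move=> q_path; rewrite /run_weight; congr seriprod; apply: funext => t.
by rewrite !run_stacks_app pdtm_move_cat.
Qed.

Lemma avoiding_path_strip al be q : al <> [::] ->
  pd_path (run_stacks (al ++ be) q) -> avoids be (run_stacks (al ++ be) q) ->
  exists2 q', pd_path (run_stacks al q') & run_app be q' = q.
Proof.
move=> al_nil q_path q_avoid.
have suffix := pd_path_avoids_suffix (erefl _) al_nil q_path q_avoid.
have Es t : run_stacks al (run_strip be q) t ++ be = run_stacks (al ++ be) q t.
  case: t => [//|t]; have [al' _ /= ->] := suffix t.+1.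
  by rewrite size_cat addnK take_size_cat.
exists (run_strip be q); last first.
  apply: sval_inj; rewrite /= [RHS]surjective_pairing; congr pair.
  by apply: funext => t; apply: (Es t.+1).
move=> t; have [[//|a rho] _ Et] := suffix t.
have [p [pi [pi' [Est Est1]]]] := q_path t.
move: Est; rewrite Et cat_cons => -[_ Epi']; exists a, pi, rho; split.
  by apply: (@catIs _ be); rewrite /= Es.
by apply: (@catIs _ be); rewrite Es Est1 -Epi' catA.
Qed.

Lemma pomega_if_avoids be al : pomega_if (avoids be) (al ++ be) = pomega M l al.
Proof.
case: al => [|a al']; first by rewrite pomega_nil pomega_if_eq0 // => q /(_ 0).
set al := a :: al'; have al_nil : al <> [::] by [].
apply: funext => i; apply: funext => w; rewrite pomegaE /pomega_if /osersum.
rewrite [RHS](@csum_support _ _ (fun q => pd_path (run_stacks al q))); last first.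
  by move=> q /run_weight_eq0 ->.
pose app (x : {q | pd_path (run_stacks al q)}) :=
  exist (fun q => avoids be (run_stacks (al ++ be) q)) _ (@run_app_avoids be _ _ (proj2_sig x)).
rewrite (csum_inj (e := app)).
- by apply: eq_csum => -[q q_path]; rewrite (run_weight_app be i q_path).
- by move=> x y /(congr1 sval)/run_app_inj/sval_inj.
case=> q q_avoid Nq; have [q_path|Nq_path] := classic (pd_path (run_stacks (al ++ be) q)).
  have [q' q'_path Eq] := avoiding_path_strip al_nil q_path q_avoid.
  by case: (Nq (exist _ q' q'_path)); apply: sval_inj.
by rewrite /= run_weight_eq0.
Qed.

Definition reach_time (be : seq Gamma) (s : nat -> seq Gamma) (o : option nat) :=
  if o is Some m then first_reaches be m s else avoids be s.

Lemma reach_time_unique be s : exists! o, reach_time be s o.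
Proof.
have [[t0 st0]|Nreach] := classic (exists t, s t = be); last first.
  exists None; split=> [t st|[m [sm _]|//]]; first by apply: Nreach; exists t.
  by case: Nreach; exists m.
have reach : exists t, s t == be by exists t0; apply/eqP.
case: (ex_minnP reach) => m /eqP sm m_min; exists (Some m); split.
  by split=> // t tm /eqP /m_min; rewrite leqNgt tm.
case=> [m'|/(_ m)//] [sm' Nm']; congr Some; apply/eqP; rewrite eqn_leq m_min ?sm' //=.
by rewrite leqNgt; apply/negP => /Nm'.
Qed.

Lemma pomega_cat al be i w : pomega M l (al ++ be) i w =
  sadd (pomega M l al i w) (matvec (pstar M al [::]) (pomega M l be) i w).
Proof.
pose reach o q := reach_time be (run_stacks (al ++ be) q) o.
rewrite pomegaE /osersum (@partition_csum _ _ _ reach); last by move=> q; apply: reach_time_unique.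
rewrite csum_option -(pomega_if_avoids be al); congr sadd.
rewrite /pstar -/(matsum _) matvec_suml; apply: eq_csum => m.
by rewrite -pomega_if_first_reaches.
Qed.


Lemma pomega_seq (p0 : Gamma) pi :
  pomega M l pi = ovecsum (fun j : 'I_(size pi) =>
    matvec (mprod (map (fun p => pstar M [:: p] [::]) (take j pi)))
           (pomega M l [:: nth p0 pi j])).
Proof.
elim: pi => [|a pi IHpi].
  rewrite pomega_nil; apply: funext => i; apply: funext => w.
  by symmetry; apply: csum_empty => -[].
apply: funext => i; apply: funext => w.
rewrite -cat1s pomega_cat /ovecsum /osersum csum_ord_recl /= matvec1; congr sadd.
rewrite IHpi matvec_sumr; apply: eq_csum => j.
by rewrite matvecA.
Qed.

Lemma pomega_unfold_nonnil pi :
  pomega M l pi = ovecsum (fun ps : {ps : seq Gamma | ps <> [::]} =>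
                             matvec (M pi (sval ps)) (pomega M l (sval ps))).
Proof.
rewrite pomega_unfold; apply: funext => i; apply: funext => w.
apply: csum_support => ps /NNPP ->.
by rewrite pomega_nil matvec0r.
Qed.

End PushdownOmega.

Theorem corollary12 (S : csos) (Sigma : finType) (n : nat) (Gamma : finType)
    (I : 'I_n -> ser S Sigma) (M : pmat S Sigma n Gamma) (P : 'I_n -> ser S Sigma)
    (p0 : Gamma) (l : nat) :
  0 < n -> l <= n ->
  (forall i, in_Seps (I i)) -> (forall i, in_Seps (P i)) ->
  is_pdtm M ->
  let x0 := rowcol (rowmat I (pstar M [:: p0] [::])) P in
  let x := fun p : Gamma => pstar M [:: p] [::] in
  let z0 := rowovec I (pomega M l [:: p0]) in
  let z := fun p : Gamma => pomega M l [:: p] in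
  [/\ x0 = rowcol (rowmat I (x p0)) P,
      forall p : Gamma,
        x p = matsum (fun ps : seq Gamma => matmul (M [:: p] ps) (mprod (map x ps))),
      z0 = rowovec I (z p0)
    & forall p : Gamma,
        z p = ovecsum (fun ps : {ps : seq Gamma | ps <> [::]} =>
                matvec (M [:: p] (sval ps))
                  (ovecsum (fun j : 'I_(size (sval ps)) =>
                     matvec (mprod (map x (take j (sval ps))))
                            (z (nth p0 (sval ps) j)))))].
Proof.
move=> _ _ _ _ M_pd x0 x z0 z; split=> // p; first exact: pstar_unfold.
rewrite /z pomega_unfold_nonnil //; apply: eq_ovecsum => ps.
by rewrite (pomega_seq M_pd _ p0).
Qed.
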